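(* Let $(D,\rho)$, $(L_1,\sigma_1)$, $(L_2,\sigma_2)$ be metric spaces and let $(\mathcal M,\|\cdot\|)$ be a normed linear space. Let $\varphi_1: D\times L_1\to\mathcal M$ and $\varphi_2: D\times L_2\to\mathcal M$ be maps such that: (a) there are $C_0>0$ and $\alpha>0$ such that for $i=1,2$, all $\xi\in D$ and all $x,y\in L_i$, $\|\varphi_i(\xi,x)-\varphi_i(\xi,y)\|\le C_0[\sigma_i(x,y)]^{\alpha}$; (b) there are $M_0>0$ and $\beta>0$ such that the function $\Phi(\xi,x_1,x_2):=\varphi_1(\xi,x_1)-\varphi_2(\xi,x_2)$ on $D\times L_1\times L_2$ satisfies $\|\Phi(\xi',x_1,x_2)-\Phi(\xi,x_1,x_2)\|\ge M_0[\rho(\xi',\xi)]^{\beta}$ for all $(x_1,x_2)\in L_1\times L_2$ and all $\xi,\xi'\in D$. Then the set $\Delta:=\{\xi\in D:\ \varphi_1(\xi,L_1)\cap\varphi_2(\xi,L_2)\ne\varnothing\}$ satisfies $$\dim_H\Delta\le\min\{(\beta/\alpha)\dim_H(L_1\times L_2),\ \dim_H D\}.$$ Moreover, if $\varphi_1,\varphi_2$ are continuous and $L_1,L_2$ are compact, then $\Delta$ is closed in $D$.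
   Context: Cartesian products of metric spaces carry the canonical product metric, e.g. on $L_1\times L_2$: $\tilde\sigma((x_1,x_2),(y_1,y_2))=\sqrt{\sigma_1(x_1,y_1)^2+\sigma_2(x_2,y_2)^2}$, and similarly on $D\times L_i$ and $D\times L_1\times L_2$. $\dim_H$ denotes Hausdorff dimension of a metric space. *)

From Stdlib Require Import Reals Lra List.
Open Scope R_scope.

Definition is_metric {X : Type} (d : X -> X -> R) : Prop :=
  (forall x y, 0 <= d x y) /\
  (forall x y, d x y = 0 <-> x = y) /\
  (forall x y, d x y = d y x) /\
  (forall x y z, d x z <= d x y + d y z).

Definition prod_dist {X Y : Type} (d1 : X -> X -> R) (d2 : Y -> Y -> R)
  : (X * Y) -> (X * Y) -> R :=
  fun p q => sqrt (Rsqr (d1 (fst p) (fst q)) + Rsqr (d2 (snd p) (snd q))).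

Definition full {X : Type} : X -> Prop := fun _ => True.

Record NormedSpace := {
  ns_car :> Type;
  ns_zero : ns_car;
  ns_add : ns_car -> ns_car -> ns_car;
  ns_opp : ns_car -> ns_car;
  ns_scal : R -> ns_car -> ns_car;
  ns_norm : ns_car -> R;
  ns_addA : forall x y z, ns_add x (ns_add y z) = ns_add (ns_add x y) z;
  ns_addC : forall x y, ns_add x y = ns_add y x;
  ns_add0 : forall x, ns_add x ns_zero = x;
  ns_addN : forall x, ns_add x (ns_opp x) = ns_zero;
  ns_scalA : forall a b x, ns_scal a (ns_scal b x) = ns_scal (a * b) x;
  ns_scal1 : forall x, ns_scal 1 x = x;
  ns_scalDr : forall a x y, ns_scal a (ns_add x y) = ns_add (ns_scal a x) (ns_scal a y);
  ns_scalDl : forall a b x, ns_scal (a + b) x = ns_add (ns_scal a x) (ns_scal b x);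
  ns_norm_ge0 : forall x, 0 <= ns_norm x;
  ns_norm_eq0 : forall x, ns_norm x = 0 -> x = ns_zero;
  ns_normZ : forall a x, ns_norm (ns_scal a x) = Rabs a * ns_norm x;
  ns_normD : forall x y, ns_norm (ns_add x y) <= ns_norm x + ns_norm y
}.

Definition ns_sub (M : NormedSpace) (x y : M) : M := ns_add M x (ns_opp M y).

(* real power with the convention 0^a = 0 (used only for a > 0) *)
Definition rpow (x a : R) : R := if Rle_dec x 0 then 0 else Rpower x a.

Inductive ereal := EFin (r : R) | EPInf.

Definition ele (a b : ereal) : Prop :=
  match a, b with
  | _, EPInf => True
  | EPInf, EFin _ => False
  | EFin x, EFin y => x <= y
  end.

Definition emin (a b : ereal) : ereal :=
  match a, b with
  | EPInf, _ => b
  | _, EPInf => a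
  | EFin x, EFin y => EFin (Rmin x y)
  end.

Definition escale (c : R) (a : ereal) : ereal :=
  match a with EFin x => EFin (c * x) | EPInf => EPInf end.

(* d is the diameter of E (diameter of the empty set is 0) *)
Definition is_diam {X : Type} (dist : X -> X -> R) (E : X -> Prop) (d : R) : Prop :=
  ((forall x, ~ E x) /\ d = 0) \/
  ((exists x, E x) /\ is_lub (fun t => exists x y, E x /\ E y /\ t = dist x y) d).

(* H^s(A) = 0, i.e. for every delta > 0, H^s_delta(A) = 0: for every eps > 0
   there is a countable delta-cover (U_n) of A with sum_n (diam U_n)^s <= eps. *)
Definition hnull {X : Type} (dist : X -> X -> R) (s : R) (A : X -> Prop) : Prop :=
  forall delta eps, 0 < delta -> 0 < eps ->
  exists (U : nat -> X -> Prop) (dm : nat -> R),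
    (forall n, is_diam dist (U n) (dm n) /\ dm n <= delta) /\
    (forall x, A x -> exists n, U n x) /\
    (forall N, sum_f_R0 (fun n => rpow (dm n) s) N <= eps).

(* v is the Hausdorff dimension of A: v = inf { s > 0 | H^s(A) = 0 } in [0,+oo] *)
Definition is_hdim {X : Type} (dist : X -> X -> R) (A : X -> Prop) (v : ereal) : Prop :=
  match v with
  | EPInf => forall s, 0 < s -> ~ hnull dist s A
  | EFin r =>
      (exists s, 0 < s /\ hnull dist s A) /\
      (forall s, 0 < s -> hnull dist s A -> r <= s) /\
      (forall r', (forall s, 0 < s -> hnull dist s A -> r' <= s) -> r' <= r)
  end.

Definition is_open {X : Type} (dist : X -> X -> R) (U : X -> Prop) : Prop :=
  forall x, U x -> exists r, 0 < r /\ forall y, dist x y < r -> U y.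

Definition compact_space {X : Type} (dist : X -> X -> R) : Prop :=
  forall (I : Type) (U : I -> X -> Prop),
    (forall i, is_open dist (U i)) -> (forall x, exists i, U i x) ->
    exists l : list I, forall x, exists i, In i l /\ U i x.

Definition closed_in {X : Type} (dist : X -> X -> R) (A : X -> Prop) : Prop :=
  forall x, (forall eps, 0 < eps -> exists y, A y /\ dist x y < eps) -> A x.

Definition continuous_into {X : Type} (dist : X -> X -> R) (M : NormedSpace)
  (f : X -> M) : Prop :=
  forall p eps, 0 < eps -> exists del, 0 < del /\
    forall q, dist p q < del -> ns_norm M (ns_sub M (f p) (f q)) < eps.

Definition DeltaSet {D L1 L2 : Type} (M : NormedSpace)
  (phi1 : D -> L1 -> M) (phi2 : D -> L2 -> M) : D -> Prop :=
  fun xi => exists x1 x2, phi1 xi x1 = phi2 xi x2.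

From Stdlib Require Import Reals Lra List Classical ClassicalEpsilon.
Open Scope R_scope.

(* Let [d] be the product metric on [L1 x L2].  If [phi1 xi a = phi2 xi b] and
   [phi1 xi' a' = phi2 xi' b'], then by (b) and (a)
     [M0 rho(xi, xi')^beta <= |Phi(xi, a', b')| <= 2 C0 d((a, b), (a', b'))^alpha],
   so the coincidence parameters depend (alpha/beta)-Hölder on the coincidence points:
   a cover of [L1 x L2] by sets of diameter [r] yields a cover of [Delta] by sets of
   diameter [O(r^(alpha/beta))], and [H^s(L1 x L2) = 0] forces [H^(beta s/alpha)(Delta) = 0].
   For closedness: at a parameter outside [Delta] the two compact images are a positive
   distance apart, and continuity, uniform along the compact fibres, keeps them apart
   at nearby parameters. *)

Local Notation ns_dist M x y := (ns_norm M (ns_sub M x y)).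

Section NormedSpaceFacts.
Variable M : NormedSpace.

Lemma ns_add0l (x : M) : ns_add M (ns_zero M) x = x.
Proof. rewrite ns_addC; apply ns_add0. Qed.

Lemma ns_sub_diag (x : M) : ns_sub M x x = ns_zero M.
Proof. apply ns_addN. Qed.

Lemma ns_add_eq0_opp (w v : M) : ns_add M w v = ns_zero M -> w = ns_opp M v.
Proof.
  intro H. rewrite <- (ns_add0 M w), <- (ns_addN M v), ns_addA, H. apply ns_add0l.
Qed.

Lemma ns_sub_eq0 (x y : M) : ns_sub M x y = ns_zero M -> x = y.
Proof.
  unfold ns_sub. intro H.
  rewrite <- (ns_add0 M x), <- (ns_addN M y), (ns_addC M y), ns_addA, H. apply ns_add0l.
Qed.

Lemma ns_sub0r (x : M) : ns_sub M x (ns_zero M) = x.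
Proof.
  unfold ns_sub. rewrite <- (ns_add_eq0_opp (ns_zero M) (ns_zero M)) by apply ns_add0.
  apply ns_add0.
Qed.

Lemma ns_sub_add_sub (x y z : M) : ns_add M (ns_sub M x y) (ns_sub M y z) = ns_sub M x z.
Proof.
  unfold ns_sub. rewrite <- ns_addA, (ns_addA M (ns_opp M y) y), (ns_addC M (ns_opp M y)),
    ns_addN, ns_add0l. reflexivity.
Qed.

Lemma ns_scal0 (v : M) : ns_scal M 0 v = ns_zero M.
Proof.
  assert (Hdouble : ns_add M (ns_scal M 0 v) (ns_scal M 0 v) = ns_scal M 0 v).
  { rewrite <- ns_scalDl. f_equal. ring. }
  rewrite <- (ns_addN M (ns_scal M 0 v)). rewrite <- Hdouble at 2.
  rewrite <- ns_addA, ns_addN. symmetry. apply ns_add0.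
Qed.

Lemma ns_opp_scal (v : M) : ns_opp M v = ns_scal M (-1) v.
Proof.
  symmetry. apply ns_add_eq0_opp. rewrite <- (ns_scal1 M v) at 2.
  rewrite <- ns_scalDl. replace (-1 + 1) with 0 by ring. apply ns_scal0.
Qed.

Lemma ns_oppK (v : M) : ns_opp M (ns_opp M v) = v.
Proof. symmetry. apply ns_add_eq0_opp, ns_addN. Qed.

Lemma ns_dist_triangle (x y z : M) : ns_dist M x z <= ns_dist M x y + ns_dist M y z.
Proof. rewrite <- (ns_sub_add_sub x y z). apply ns_normD. Qed.

Lemma ns_distC (x y : M) : ns_dist M x y = ns_dist M y x.
Proof.
  assert (Hneg : ns_sub M y x = ns_scal M (-1) (ns_sub M x y)).
  { unfold ns_sub. rewrite ns_scalDr, <- !ns_opp_scal.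
    rewrite ns_oppK. apply ns_addC. }
  rewrite Hneg, ns_normZ, Rabs_left by lra. ring.
Qed.

Lemma ns_dist_pos (x y : M) : x <> y -> 0 < ns_dist M x y.
Proof.
  intro Hxy. destruct (ns_norm_ge0 M (ns_sub M x y)) as [Hpos | Hzero]; auto.
  exfalso. apply Hxy, ns_sub_eq0, ns_norm_eq0. auto.
Qed.

End NormedSpaceFacts.

Lemma rpow_ge0 x p : 0 <= rpow x p.
Proof. unfold rpow. destruct (Rle_dec x 0); [lra | left; apply exp_pos]. Qed.

Lemma rpow_gt0 x p : 0 < x -> 0 < rpow x p.
Proof. intro Hx. unfold rpow. destruct (Rle_dec x 0); [lra | apply exp_pos]. Qed.

Lemma rpow0 p : rpow 0 p = 0.
Proof. unfold rpow. destruct (Rle_dec 0 0); lra. Qed.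

Lemma rpowE x p : 0 < x -> rpow x p = Rpower x p.
Proof. intro Hx. unfold rpow. destruct (Rle_dec x 0); [lra | reflexivity]. Qed.

Lemma rpow_le x y p : 0 <= x <= y -> 0 < p -> rpow x p <= rpow y p.
Proof.
  intros Hxy Hp. destruct (Req_dec x 0) as [-> | Hx].
  - rewrite rpow0. apply rpow_ge0.
  - rewrite !rpowE by lra. apply Rle_Rpower_l; lra.
Qed.

Lemma rpow_rpow x p q : 0 <= x -> rpow (rpow x p) q = rpow x (p * q).
Proof.
  intro Hx. destruct (Req_dec x 0) as [-> | Hx0].
  - rewrite !rpow0. reflexivity.
  - rewrite (rpowE x p), rpowE, rpowE by (try apply exp_pos; lra). apply Rpower_mult.
Qed.

Lemma rpow1 x : 0 <= x -> rpow x 1 = x.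
Proof.
  intro Hx. destruct (Req_dec x 0) as [-> | Hx0]; [apply rpow0 |].
  rewrite rpowE by lra. apply Rpower_1. lra.
Qed.

Lemma rpowMl x y p : 0 <= x -> 0 <= y -> rpow (x * y) p = rpow x p * rpow y p.
Proof.
  intros Hx Hy. destruct (Req_dec x 0) as [-> | Hx0]; [rewrite Rmult_0_l, !rpow0; ring |].
  destruct (Req_dec y 0) as [-> | Hy0]; [rewrite Rmult_0_r, !rpow0; ring |].
  rewrite !rpowE by (try apply Rmult_lt_0_compat; lra).
  symmetry. apply Rpower_mult_distr; lra.
Qed.

Lemma rpow_le_holder r d c alpha beta :
  0 <= r -> 0 <= d -> 0 <= c -> 0 < beta ->
  rpow r beta <= c * rpow d alpha -> r <= rpow c (/ beta) * rpow d (alpha / beta).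
Proof.
  intros Hr Hd Hc Hbeta Hle.
  assert (Hcd : 0 <= c * rpow d alpha) by (apply Rmult_le_pos; [lra | apply rpow_ge0]).
  rewrite <- (rpow1 r), <- (Rinv_r beta), <- rpow_rpow by lra.
  replace (alpha / beta) with (alpha * / beta) by reflexivity.
  rewrite <- (rpow_rpow d), <- rpowMl by (try apply rpow_ge0; lra).
  apply rpow_le; [split; [apply rpow_ge0 | exact Hle] | apply Rinv_0_lt_compat; lra].
Qed.

Lemma prod_dist_ge0 {X Y} (d1 : X -> X -> R) (d2 : Y -> Y -> R) p q :
  0 <= prod_dist d1 d2 p q.
Proof. apply sqrt_pos. Qed.

Lemma prod_dist_le_add {X Y} (d1 : X -> X -> R) (d2 : Y -> Y -> R) x x' y y' :
  0 <= d1 x x' -> 0 <= d2 y y' -> prod_dist d1 d2 (x, y) (x', y') <= d1 x x' + d2 y y'.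
Proof.
  intros H1 H2. unfold prod_dist; simpl.
  rewrite <- (sqrt_Rsqr (d1 x x' + d2 y y')) by lra.
  apply sqrt_le_1_alt. unfold Rsqr. nra.
Qed.

Lemma prod_dist_ge_fst {X Y} (d1 : X -> X -> R) (d2 : Y -> Y -> R) x x' y y' :
  0 <= d1 x x' -> d1 x x' <= prod_dist d1 d2 (x, y) (x', y').
Proof.
  intro H. unfold prod_dist; simpl. rewrite <- (sqrt_Rsqr (d1 x x')) at 1 by lra.
  apply sqrt_le_1_alt. pose proof (Rle_0_sqr (d2 y y')). lra.
Qed.

Lemma prod_dist_ge_snd {X Y} (d1 : X -> X -> R) (d2 : Y -> Y -> R) x x' y y' :
  0 <= d2 y y' -> d2 y y' <= prod_dist d1 d2 (x, y) (x', y').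
Proof.
  intro H. unfold prod_dist; simpl. rewrite <- (sqrt_Rsqr (d2 y y')) at 1 by lra.
  apply sqrt_le_1_alt. pose proof (Rle_0_sqr (d1 x x')). lra.
Qed.

Section Diameter.
Context {X : Type} (dist : X -> X -> R).
Hypothesis dist_ge0 : forall x y, 0 <= dist x y.

Lemma is_diam_ub E dm x y : is_diam dist E dm -> E x -> E y -> dist x y <= dm.
Proof.
  intros [[Hempty _] | [_ Hlub]] Hx Hy; [exfalso; exact (Hempty x Hx) |].
  apply Hlub. exists x, y. auto.
Qed.

Lemma is_diam_ge0 E dm : is_diam dist E dm -> 0 <= dm.
Proof.
  intros [[_ ->] | [[x Hx] Hlub]]; [lra |].
  apply Rle_trans with (dist x x); auto. apply Hlub. exists x, x. auto.
Qed.

Lemma is_diam_exists_le E B : 0 <= B -> (forall x y, E x -> E y -> dist x y <= B) ->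
  exists dm, is_diam dist E dm /\ dm <= B.
Proof.
  intros HB HE. destruct (classic (exists x, E x)) as [[x Hx] | Hempty].
  - set (S := fun t => exists x y, E x /\ E y /\ t = dist x y).
    assert (Hbound : bound S) by (exists B; intros t (u & v & Hu & Hv & ->); auto).
    destruct (completeness S Hbound) as [dm Hdm]; [exists (dist x x), x, x; auto |].
    exists dm. split; [right; eauto |].
    apply Hdm. intros t (u & v & Hu & Hv & ->). auto.
  - exists 0. split; [left; split; [intros x Hx; eauto | reflexivity] | lra].
Qed.

End Diameter.

Lemma hnull_holder_image {X Y} (dX : X -> X -> R) (dY : Y -> Y -> R)
  (Rel : Y -> X -> Prop) (A : X -> Prop) (K gam s : R) :
  (forall x y, 0 <= dX x y) -> (forall p q, 0 <= dY p q) ->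
  0 < K -> 0 < gam -> 0 < s ->
  (forall x, A x -> exists p, Rel p x) ->
  (forall p q x y, Rel p x -> Rel q y -> dX x y <= K * rpow (dY p q) gam) ->
  hnull dY s full -> hnull dX (s / gam) A.
Proof.
  intros HdX HdY HK Hgam Hs Hsurj Hholder Hnull del eps Hdel Heps.
  set (KS := rpow K (s / gam)).
  assert (HKS : 0 < KS) by (apply rpow_gt0; lra).
  set (del' := rpow (del / K) (/ gam)).
  assert (Hdel' : K * rpow del' gam = del).
  { unfold del'. rewrite rpow_rpow, Rinv_l, rpow1 by (unfold Rdiv; try apply Rmult_le_pos;
      try (left; apply Rinv_0_lt_compat); lra). field. lra. }
  destruct (Hnull del' (eps / KS)) as (U & dm & HU & Hcov & Hsum).
  { apply rpow_gt0, Rdiv_lt_0_compat; lra. }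
  { apply Rdiv_lt_0_compat; lra. }
  assert (Hdm0 : forall n, 0 <= dm n) by (intro n; exact (is_diam_ge0 dY HdY _ _ (proj1 (HU n)))).
  set (V := fun n x => exists p, U n p /\ Rel p x).
  set (B := fun n => K * rpow (dm n) gam).
  assert (HVB : forall n x y, V n x -> V n y -> dX x y <= B n).
  { intros n x y (p & Hp & Hpx) (q & Hq & Hqy).
    eapply Rle_trans; [exact (Hholder p q x y Hpx Hqy) |].
    apply Rmult_le_compat_l; [lra |]. apply rpow_le; [| lra].
    split; [auto | exact (is_diam_ub dY _ _ _ _ (proj1 (HU n)) Hp Hq)]. }
  assert (HBdel : forall n, B n <= del).
  { intro n. rewrite <- Hdel'. apply Rmult_le_compat_l; [lra |].
    apply rpow_le; [split; [auto | apply HU] | lra]. }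
  assert (HBs : forall n, rpow (B n) (s / gam) = KS * rpow (dm n) s).
  { intro n. unfold B, KS. rewrite rpowMl, rpow_rpow by (try apply rpow_ge0; auto; lra).
    f_equal. f_equal. field. lra. }
  destruct (choice (fun n e => is_diam dX (V n) e /\ e <= B n)) as [e He].
  { intro n. apply is_diam_exists_le; auto.
    apply Rmult_le_pos; [lra | apply rpow_ge0]. }
  exists V, e. split; [| split].
  - intro n. split; [apply He | eapply Rle_trans; [apply He | apply HBdel]].
  - intros x Hx. destruct (Hsurj x Hx) as [p Hp]. destruct (Hcov p I) as [n Hn].
    exists n, p. auto.
  - intro N. apply Rle_trans with (KS * sum_f_R0 (fun n => rpow (dm n) s) N).
    + rewrite scal_sum. apply sum_Rle. intros n _. rewrite Rmult_comm, <- HBs.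
      apply rpow_le; [| apply Rdiv_lt_0_compat; lra].
      split; [exact (is_diam_ge0 dX HdX _ _ (proj1 (He n))) | apply He].
    + apply Rle_trans with (KS * (eps / KS)); [apply Rmult_le_compat_l; [lra | apply Hsum] |].
      right. field. lra.
Qed.

Lemma hnull_subset {X} (d : X -> X -> R) s (A B : X -> Prop) :
  (forall x, A x -> B x) -> hnull d s B -> hnull d s A.
Proof.
  intros HAB Hnull del eps Hdel Heps.
  destruct (Hnull del eps Hdel Heps) as (U & dm & HU & Hcov & Hsum).
  exists U, dm. auto.
Qed.

Lemma is_hdim_le_scale {X Y} (dA : X -> X -> R) (dB : Y -> Y -> R) A B k va vb :
  0 < k -> (forall s, 0 < s -> hnull dA s A -> hnull dB (k * s) B) ->
  is_hdim dB B vb -> is_hdim dA A va -> ele vb (escale k va).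
Proof.
  intros Hk Htransfer HB HA. destruct va as [r |]; [| destruct vb; exact I].
  destruct HA as ((s & Hs & Hnull) & _ & Hglb). destruct vb as [r' |]; simpl.
  - destruct HB as (_ & Hlow & _).
    assert (Hr : r' / k <= r).
    { apply Hglb. intros s' Hs' Hnull'.
      assert (r' <= k * s') by (apply Hlow; [nra | auto]).
      apply (Rmult_le_reg_l k); [lra |]. field_simplify; lra. }
    replace r' with (k * (r' / k)) by (field; lra). apply Rmult_le_compat_l; lra.
  - apply (HB (k * s)); [nra | auto].
Qed.

Lemma is_hdim_le_subset {X} (d : X -> X -> R) (A B : X -> Prop) va vb :
  (forall x, A x -> B x) -> is_hdim d A va -> is_hdim d B vb -> ele va vb.
Proof.
  intros HAB HA HB.
  assert (H1 : ele va (escale 1 vb)).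
  { apply (is_hdim_le_scale d d B A); auto; [lra |].
    intros s _ Hnull. rewrite Rmult_1_l. eapply hnull_subset; eauto. }
  destruct vb; simpl in H1; [rewrite Rmult_1_l in H1 |]; exact H1.
Qed.

Lemma ele_emin a b c : ele a b -> ele a c -> ele a (emin b c).
Proof. destruct a, b, c; simpl; auto. intros. apply Rmin_glb; auto. Qed.

Section CoincidenceParameters.
Variables (D L1 L2 : Type) (rho : D -> D -> R).
Variables (sigma1 : L1 -> L1 -> R) (sigma2 : L2 -> L2 -> R).
Hypotheses (HD : is_metric rho) (HL1 : is_metric sigma1) (HL2 : is_metric sigma2).
Variables (M : NormedSpace) (phi1 : D -> L1 -> M) (phi2 : D -> L2 -> M).
Variables (C0 alpha M0 beta : R).
Hypotheses (hC0 : 0 < C0) (halpha : 0 < alpha) (hM0 : 0 < M0) (hbeta : 0 < beta).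
Hypothesis Ha1 : forall xi x y, ns_dist M (phi1 xi x) (phi1 xi y) <= C0 * rpow (sigma1 x y) alpha.
Hypothesis Ha2 : forall xi x y, ns_dist M (phi2 xi x) (phi2 xi y) <= C0 * rpow (sigma2 x y) alpha.
Hypothesis Hb : forall x1 x2 xi xi',
  ns_dist M (ns_sub M (phi1 xi' x1) (phi2 xi' x2)) (ns_sub M (phi1 xi x1) (phi2 xi x2))
  >= M0 * rpow (rho xi' xi) beta.

Lemma coincidence_param_holder a b a' b' xi xi' :
  phi1 xi a = phi2 xi b -> phi1 xi' a' = phi2 xi' b' ->
  rho xi xi' <= rpow (2 * C0 / M0) (/ beta)
                * rpow (prod_dist sigma1 sigma2 (a, b) (a', b')) (alpha / beta).
Proof.
  destruct HD as [Hrho0 _]. destruct HL1 as (Hs1 & _ & Hs1C & _). destruct HL2 as [Hs2 _].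
  intros Hxi Hxi'. set (d := prod_dist sigma1 sigma2 (a, b) (a', b')).
  assert (H1 : C0 * rpow (sigma1 a' a) alpha <= C0 * rpow d alpha).
  { apply Rmult_le_compat_l; [lra |].
    apply rpow_le; [rewrite Hs1C; split; [auto | apply prod_dist_ge_fst; auto] | lra]. }
  assert (H2 : C0 * rpow (sigma2 b b') alpha <= C0 * rpow d alpha).
  { apply Rmult_le_compat_l; [lra |].
    apply rpow_le; [split; [auto | apply prod_dist_ge_snd; auto] | lra]. }
  assert (Hgap : M0 * rpow (rho xi xi') beta <= ns_dist M (phi1 xi a') (phi2 xi b')).
  { pose proof (Hb a' b' xi' xi) as Hsep.
    rewrite Hxi', ns_sub_diag, ns_sub0r in Hsep. lra. }
  pose proof (ns_dist_triangle M (phi1 xi a') (phi1 xi a) (phi2 xi b')) as Htri.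
  pose proof (Ha1 xi a' a) as Hhold1. pose proof (Ha2 xi b b') as Hhold2.
  rewrite Hxi in Htri, Hhold1.
  apply rpow_le_holder; auto; [apply prod_dist_ge0 | apply Rlt_le, Rdiv_lt_0_compat; lra |].
  apply (Rmult_le_reg_l M0); [lra |].
  replace (M0 * (2 * C0 / M0 * rpow d alpha)) with (2 * C0 * rpow d alpha) by (field; lra).
  lra.
Qed.

Lemma hnull_DeltaSet s : 0 < s -> hnull (prod_dist sigma1 sigma2) s full ->
  hnull rho (beta / alpha * s) (DeltaSet M phi1 phi2).
Proof.
  intros Hs Hnull. replace (beta / alpha * s) with (s / (alpha / beta)) by (field; lra).
  apply (hnull_holder_image rho (prod_dist sigma1 sigma2)
           (fun p xi => phi1 xi (fst p) = phi2 xi (snd p)) _ (rpow (2 * C0 / M0) (/ beta)));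
    auto.
  - apply HD.
  - apply prod_dist_ge0.
  - apply rpow_gt0. apply Rdiv_lt_0_compat; lra.
  - apply Rdiv_lt_0_compat; lra.
  - intros xi (a & b & Hab). exists (a, b). exact Hab.
  - intros [a b] [a' b'] xi xi'. apply coincidence_param_holder.
Qed.

End CoincidenceParameters.

Lemma compact_uniform_bound {X} (d : X -> X -> R) (Q : X -> R -> Prop) :
  is_metric d -> compact_space d ->
  (forall x c c', Q x c -> c' <= c -> Q x c') ->
  (forall x, exists c r, 0 < c /\ 0 < r /\ forall y, d x y < r -> Q y c) ->
  exists c, 0 < c /\ forall x, Q x c.
Proof.
  intros (_ & Hd0 & _ & Htri) Hcpt Hmono Hloc.
  set (U := fun (i : X * R * R) y => let '(x, c, r) := i in
              0 < c /\ (forall z, d x z < r -> Q z c) /\ d x y < r).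
  assert (Hfinite : forall l, exists c, 0 < c /\ forall i y, In i l -> U i y -> Q y c).
  { induction l as [| [[x c] r] l [c0 [Hc0 IH]]].
    - exists 1. split; [lra | intros i y []].
    - destruct (Rlt_le_dec 0 c) as [Hc | Hc].
      + exists (Rmin c c0). split; [apply Rmin_glb_lt; auto |].
        intros i y [<- | Hi] HU.
        * destruct HU as (_ & HQ & Hy). apply Hmono with c; [exact (HQ y Hy) | apply Rmin_l].
        * apply Hmono with c0; [eapply IH; eauto | apply Rmin_r].
      + exists c0. split; auto. intros i y [<- | Hi] HU; [simpl in HU; lra | eauto]. }
  destruct (Hcpt _ U) as [l Hl].
  - intros [[x c] r] y (Hc & HQ & Hy). exists (r - d x y). split; [lra |].
    intros z Hz. repeat split; auto. pose proof (Htri x y z). lra.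
  - intro y. destruct (Hloc y) as (c & r & Hc & Hr & HQ). exists (y, c, r).
    repeat split; auto. rewrite (proj2 (Hd0 y y) eq_refl). exact Hr.
  - destruct (Hfinite l) as (c & Hc & Hcl). exists c. split; auto.
    intro y. destruct (Hl y) as (i & Hi & HU). eauto.
Qed.

Section JointContinuity.
Context {D L : Type} (rho : D -> D -> R) (sigma : L -> L -> R) (M : NormedSpace).
Hypotheses (HD : is_metric rho) (HL : is_metric sigma).
Variable phi : D -> L -> M.
Hypothesis Hphi : continuous_into (prod_dist rho sigma) M (fun p => phi (fst p) (snd p)).

Lemma continuous_into_prod_at xi a eps : 0 < eps -> exists del, 0 < del /\
  forall xi' a', rho xi xi' < del -> sigma a a' < del ->
  ns_dist M (phi xi a) (phi xi' a') < eps.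
Proof.
  intro Heps. destruct (Hphi (xi, a) eps Heps) as (del & Hdel & Hnear).
  exists (del / 2). split; [lra |]. intros xi' a' Hxi Ha.
  apply (Hnear (xi', a')). eapply Rle_lt_trans; [apply prod_dist_le_add; [apply HD | apply HL] |].
  lra.
Qed.

Lemma continuous_into_slice xi : continuous_into sigma M (phi xi).
Proof.
  intros a eps Heps. destruct (continuous_into_prod_at xi a eps Heps) as (del & Hdel & Hnear).
  exists del. split; auto. intros a' Ha. apply Hnear; auto.
  destruct HD as (_ & Hd0 & _). rewrite (proj2 (Hd0 xi xi) eq_refl). exact Hdel.
Qed.

Lemma compact_uniform_continuity_fibre : compact_space sigma ->
  forall xi eps, 0 < eps -> exists del, 0 < del /\
    forall a xi', rho xi xi' < del -> ns_dist M (phi xi a) (phi xi' a) < eps.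
Proof.
  intros Hcpt xi eps Heps.
  apply (compact_uniform_bound sigma); auto.
  - intros a c c' Hc Hc' xi' Hxi'. apply Hc. lra.
  - intro a. destruct (continuous_into_prod_at xi a (eps / 2)) as (del & Hdel & Hnear); [lra |].
    exists (del / 2), (del / 2). split; [lra | split; [lra |]].
    intros a' Ha' xi' Hxi'.
    assert (Hxi0 : rho xi xi = 0) by (apply HD; reflexivity).
    pose proof (Hnear xi a' ltac:(lra) ltac:(lra)) as Hslice.
    pose proof (Hnear xi' a' ltac:(lra) ltac:(lra)) as Hmoved.
    pose proof (ns_dist_triangle M (phi xi a') (phi xi a) (phi xi' a')) as Htri.
    rewrite ns_distC in Hslice. lra.
Qed.

End JointContinuity.

Lemma compact_dist_lower_bound {L} (sigma : L -> L -> R) (M : NormedSpace) (g : L -> M) v :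
  is_metric sigma -> compact_space sigma -> continuous_into sigma M g ->
  (forall b, v <> g b) -> exists c, 0 < c /\ forall b, c <= ns_dist M v (g b).
Proof.
  intros Hsigma Hcpt Hg Hv.
  apply (compact_uniform_bound sigma); auto; [intros; lra |].
  intro b. set (c := ns_dist M v (g b)).
  assert (Hc : 0 < c) by (apply ns_dist_pos, Hv).
  destruct (Hg b (c / 2)) as (r & Hr & Hnear); [lra |].
  exists (c / 2), r. split; [lra | split; auto]. intros y Hy.
  pose proof (Hnear y Hy) as Hgy. pose proof (ns_dist_triangle M v (g y) (g b)) as Htri.
  rewrite (ns_distC M (g y)) in Htri. unfold c in *. lra.
Qed.

Lemma compact_images_apart {L1 L2} (sigma1 : L1 -> L1 -> R) (sigma2 : L2 -> L2 -> R)
  (M : NormedSpace) (f : L1 -> M) (g : L2 -> M) :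
  is_metric sigma1 -> is_metric sigma2 -> compact_space sigma1 -> compact_space sigma2 ->
  continuous_into sigma1 M f -> continuous_into sigma2 M g -> (forall a b, f a <> g b) ->
  exists c, 0 < c /\ forall a b, c <= ns_dist M (f a) (g b).
Proof.
  intros Hs1 Hs2 Hcpt1 Hcpt2 Hf Hg Hfg.
  apply (compact_uniform_bound sigma1 (fun a c => forall b, c <= ns_dist M (f a) (g b))); auto.
  { intros a c c' Hc Hc' b. specialize (Hc b). lra. }
  intro a. destruct (compact_dist_lower_bound sigma2 M g (f a)) as (c & Hc & Hlow); auto.
  destruct (Hf a (c / 2)) as (r & Hr & Hnear); [lra |].
  exists (c / 2), r. split; [lra | split; auto]. intros y Hy b.
  pose proof (Hnear y Hy). pose proof (Hlow b).
  pose proof (ns_dist_triangle M (f a) (f y) (g b)). lra.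
Qed.

Lemma DeltaSet_closed {D L1 L2} (rho : D -> D -> R) (sigma1 : L1 -> L1 -> R)
  (sigma2 : L2 -> L2 -> R) (M : NormedSpace) (phi1 : D -> L1 -> M) (phi2 : D -> L2 -> M) :
  is_metric rho -> is_metric sigma1 -> is_metric sigma2 ->
  continuous_into (prod_dist rho sigma1) M (fun p => phi1 (fst p) (snd p)) ->
  continuous_into (prod_dist rho sigma2) M (fun p => phi2 (fst p) (snd p)) ->
  compact_space sigma1 -> compact_space sigma2 ->
  closed_in rho (DeltaSet M phi1 phi2).
Proof.
  intros HD Hs1 Hs2 Hc1 Hc2 Hcpt1 Hcpt2 xi Hadh. apply NNPP. intro Hout.
  destruct (compact_images_apart sigma1 sigma2 M (phi1 xi) (phi2 xi)) as (c & Hc & Hapart);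
    try apply continuous_into_slice with rho; auto.
  { intros a b Hab. apply Hout. exists a, b. exact Hab. }
  destruct (compact_uniform_continuity_fibre rho sigma1 M HD Hs1 phi1 Hc1 Hcpt1 xi (c / 2))
    as (d1 & Hd1 & Hnear1); [lra |].
  destruct (compact_uniform_continuity_fibre rho sigma2 M HD Hs2 phi2 Hc2 Hcpt2 xi (c / 2))
    as (d2 & Hd2 & Hnear2); [lra |].
  destruct (Hadh (Rmin d1 d2)) as (y & (a & b & Hab) & Hy); [apply Rmin_glb_lt; auto |].
  pose proof (Hnear1 a y ltac:(pose proof (Rmin_l d1 d2); lra)).
  pose proof (Hnear2 b y ltac:(pose proof (Rmin_r d1 d2); lra)).
  pose proof (Hapart a b). pose proof (ns_dist_triangle M (phi1 xi a) (phi1 y a) (phi2 xi b)).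
  rewrite Hab, (ns_distC M (phi2 y b)) in *. lra.
Qed.

Theorem theorem1
  (D L1 L2 : Type) (rho : D -> D -> R) (sigma1 : L1 -> L1 -> R) (sigma2 : L2 -> L2 -> R)
  (HD : is_metric rho) (HL1 : is_metric sigma1) (HL2 : is_metric sigma2)
  (M : NormedSpace) (phi1 : D -> L1 -> M) (phi2 : D -> L2 -> M)
  (C0 alpha : R) (hC0 : 0 < C0) (halpha : 0 < alpha)
  (Ha1 : forall xi x y, ns_norm M (ns_sub M (phi1 xi x) (phi1 xi y)) <= C0 * rpow (sigma1 x y) alpha)
  (Ha2 : forall xi x y, ns_norm M (ns_sub M (phi2 xi x) (phi2 xi y)) <= C0 * rpow (sigma2 x y) alpha)
  (M0 beta : R) (hM0 : 0 < M0) (hbeta : 0 < beta)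
  (Hb : forall x1 x2 xi xi',
     ns_norm M (ns_sub M (ns_sub M (phi1 xi' x1) (phi2 xi' x2))
                         (ns_sub M (phi1 xi x1) (phi2 xi x2)))
     >= M0 * rpow (rho xi' xi) beta) :
  (forall dDelta dL dD,
     is_hdim rho (DeltaSet M phi1 phi2) dDelta ->
     is_hdim (prod_dist sigma1 sigma2) full dL ->
     is_hdim rho full dD ->
     ele dDelta (emin (escale (beta / alpha) dL) dD)) /\
  (continuous_into (prod_dist rho sigma1) M (fun p => phi1 (fst p) (snd p)) ->
   continuous_into (prod_dist rho sigma2) M (fun p => phi2 (fst p) (snd p)) ->
   compact_space sigma1 -> compact_space sigma2 ->
   closed_in rho (DeltaSet M phi1 phi2)).
Proof.
  split.
  - intros dDelta dL dD HdimDelta HdimL HdimD. apply ele_emin.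
    + apply (is_hdim_le_scale (prod_dist sigma1 sigma2) rho full (DeltaSet M phi1 phi2));
        auto; [apply Rdiv_lt_0_compat; lra |].
      intros s Hs. eapply hnull_DeltaSet with (C0 := C0) (M0 := M0); eauto.
    + apply (is_hdim_le_subset rho (DeltaSet M phi1 phi2) full); auto.
      intros; exact I.
  - apply DeltaSet_closed; auto.
Qed.
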